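(* Assume the setup and the monomial order in the context. Then $R$ is a Gröbner basis of $I$ with respect to $\le$, i.e. the monoid ideal $\mathrm{Tip}(I)$ of $X^*$ is generated by $\{\mathrm{tip}(g):g\in R\}$.
   Context: Let $k$ be a field and $n\ge 2$ an integer; write $[n]=\{1,\dots,n\}$ and $r(i)=n+1-i$. Let $X=\{u_{j,i},u^*_{j,i}:(j,i)\in[n]^2\}$ be a set of $2n^2$ distinct symbols and let $*$ be the involution of $X$ exchanging $u_{j,i}$ and $u^*_{j,i}$. Let $k\langle X\rangle$ be the free unital $k$-algebra on $X$, with $k$-basis the free monoid $X^*$ of monomials. For an $n\times n$ matrix $v=(v_{j,i})$ with entries in $X$ define $n\times n$ matrices $v^t,v^\star,v^\dagger$ with entries in $X$ by $v^t_{j,i}=v_{i,j}$, $v^\star_{j,i}=(v_{r(j),r(i)})^*$, $v^\dagger_{j,i}=(v_{r(i),r(j)})^*$. Let $u=(u_{j,i})$ and $M=\{u,u^t,u^\star,u^\dagger\}$. Let $I$ be the two-sided ideal generated by $R=\{\sum_{s=1}^n v_{j,r(s)}v^\dagger_{s,r(i)}-\delta_{j,i}1: v\in M,(j,i)\in[n]^2\}$. Monomial order: let $\le$ be the total order on $X$ with $u^*_{t,s}<u_{j,i}$ for all indices, $u_{t,s}<u_{j,i}$ iff $(t,s)<(j,i)$ lexicographically, and $u^*_{t,s}<u^*_{j,i}$ iff $(j,i)<(t,s)$ lexicographically; extend it degree-lexicographically to $X^*$ (shorter monomials are smaller; monomials of equal length are compared at the first differing letter). For $0\ne p\in k\langle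 X\rangle$, $\mathrm{tip}(p)$ is the $\le$-largest monomial with nonzero coefficient in $p$, and $\mathrm{Tip}(I)=\{\mathrm{tip}(p):0\ne p\in I\}$. *)

From HB Require Import structures.
From mathcomp Require Import all_boot all_order all_algebra.
Set Implicit Arguments. Unset Strict Implicit. Unset Printing Implicit Defensive.
Import GRing.Theory.
Local Open Scope ring_scope.

(* Letters: (b, (j, i)) with b = false for u_{j,i} and b = true for u^*_{j,i}.
   Indices 'I_n are 0-based: ordinal a stands for a+1 in [n]. *)
Definition letter (n : nat) := (bool * ('I_n * 'I_n))%type.
Definition monomial (n : nat) := seq (letter n).

Definition ustar {n} (x : letter n) : letter n := (~~ x.1, x.2).

(* r(i) = n+1-i, in 0-based form *)
Definition r {n} (i : 'I_n) : 'I_n := rev_ord i.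

Definition lex_lt {n} (p q : 'I_n * 'I_n) : bool :=
  (p.1 < q.1)%N || ((p.1 == q.1) && (p.2 < q.2)%N).

Definition letter_lt {n} (x y : letter n) : bool :=
  match x.1, y.1 with
  | true, false => true
  | false, true => false
  | false, false => lex_lt x.2 y.2
  | true, true => lex_lt y.2 x.2
  end.

Fixpoint word_lex_lt {n} (v w : monomial n) : bool :=
  match v, w with
  | x :: v', y :: w' => if x == y then word_lex_lt v' w' else letter_lt x y
  | _, _ => false
  end.

Definition mon_lt {n} (v w : monomial n) : bool :=
  (size v < size w)%N || ((size v == size w) && word_lex_lt v w).
Definition mon_le {n} (v w : monomial n) : bool := (v == w) || mon_lt v w.

(* Elements of k<X> are represented by formal finite sums
   sum_t t.1 * t.2 (coefficient, monomial); two representations denote the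
   same element iff they have the same coefficient function [coef]. *)
Definition fpoly (k : fieldType) (n : nat) := seq (k * monomial n).

Definition coef {k : fieldType} {n} (p : fpoly k n) (w : monomial n) : k :=
  \sum_(t <- p | t.2 == w) t.1.

Definition fpoly_add {k : fieldType} {n} (p q : fpoly k n) : fpoly k n := p ++ q.
Definition fpoly_mul {k : fieldType} {n} (p q : fpoly k n) : fpoly k n :=
  [seq (a.1 * b.1, a.2 ++ b.2) | a <- p, b <- q].

Definition is_tip {k : fieldType} {n} (p : fpoly k n) (w : monomial n) : Prop :=
  coef p w != 0 /\ forall v, coef p v != 0 -> mon_le v w.

Definition xmat (n : nat) := 'I_n -> 'I_n -> letter n.
Definition umat (n : nat) : xmat n := fun j i => (false, (j, i)).
Definition mtr {n} (v : xmat n) : xmat n := fun j i => v i j.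
Definition mstar {n} (v : xmat n) : xmat n := fun j i => ustar (v (r j) (r i)).
Definition mdag {n} (v : xmat n) : xmat n := fun j i => ustar (v (r i) (r j)).

Definition inM n (v : xmat n) : Prop :=
  v = @umat n \/ v = mtr (@umat n) \/ v = mstar (@umat n) \/ v = mdag (@umat n).

Definition relation (k : fieldType) {n} (v : xmat n) (j i : 'I_n) : fpoly k n :=
  [seq (1, [:: v j (r s); mdag v s (r i)]) | s <- enum 'I_n]
  ++ (if j == i then [:: (-1, [::])] else [::]).

Definition inR (k : fieldType) n (g : fpoly k n) : Prop :=
  exists v, exists j, exists i, inM v /\ g = relation k v j i.

(* I = the two-sided ideal of k<X> generated by R: the least set containing R,
   closed under addition and under left/right multiplication by arbitrary
   elements, and respecting equality in k<X>. *)
Inductive inI (k : fieldType) n : fpoly k n -> Prop :=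
| inI_gen g : inR g -> inI g
| inI_add p q : inI p -> inI q -> inI (fpoly_add p q)
| inI_mull a p : inI p -> inI (fpoly_mul a p)
| inI_mulr p a : inI p -> inI (fpoly_mul p a)
| inI_ext p q : inI p -> coef p =1 coef q -> inI q.

From mathcomp Require Import all_boot all_order all_algebra.
From mathcomp Require Import zify ring.
Set Implicit Arguments. Unset Strict Implicit. Unset Printing Implicit Defensive.
Import GRing.Theory.
Local Open Scope ring_scope.

(* The argument is Bergman's diamond lemma.  Every relation of R has leading
   word a two-letter word with coefficient 1: the quadratic term whose summation
   index is the largest one (for unstarred first letter) or the smallest one (for
   starred first letter).  The ambiguities are the inclusions u_{n,n} u*_{n,n} and
   u*_{1,1} u_{1,1}, each the leading word of two relations, and overlaps x y z of
   two leading words x y and y z.  Both kinds resolve: the two reductions are a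
   row and a column of an n x n array of words, every other row and column of
   which is a relation applied to a smaller word.
   Instead of reducing polynomials we fix an irreducible word w0 and define the
   coefficient of w0 in the leftmost normal form of a word.  Resolvability shows,
   by well-founded induction on words, that the linear extension of this
   function vanishes on I; but it sends an element of I with tip w0 to the
   (nonzero) coefficient of w0.  So every tip of I contains a leading word. *)

Lemma eqseq_cat2 (T : eqType) (a v w b : seq T) :
  (a ++ v ++ b == a ++ w ++ b) = (v == w).
Proof.
have [eq_size|neq_size] := eqVneq (size v) (size w).
  by rewrite eqseq_cat // eqxx eqseq_cat // eqxx andbT.
apply/eqP/eqP => [/(congr1 size)|->//]; rewrite !size_cat => /addnI /addIn eq_size.
by rewrite eq_size eqxx in neq_size.
Qed.

Lemma cat2_eq_cases (T : Type) (a1 a2 b1 b2 : seq T) x1 y1 x2 y2 :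
  a1 ++ x1 :: y1 :: b1 = a2 ++ x2 :: y2 :: b2 -> (size a1 <= size a2)%N ->
  [\/ [/\ a1 = a2, x1 = x2, y1 = y2 & b1 = b2],
      [/\ a2 = a1 ++ [:: x1], x2 = y1 & b1 = y2 :: b2] |
      exists c, a2 = a1 ++ x1 :: y1 :: c /\ b1 = c ++ x2 :: y2 :: b2].
Proof.
elim: a1 a2 => [|z a1 IHa] [|z' a2] //=.
- by case=> -> -> -> _; apply: Or31.
- by case=> ->; case: a2 => [|z'' a2] /= [-> ->] _; [apply: Or32 | apply: Or33; exists a2].
- case=> -> /IHa {}IHa; rewrite ltnS => /IHa [[-> -> -> ->]|[-> -> ->]|[c [-> ->]]].
  + by apply: Or31.
  + by apply: Or32.
  + by apply: Or33; exists c.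
Qed.

Lemma sum_grid (I J : finType) (V : zmodType) (T : I -> J -> V) i0 j0
    (row : I -> V) (col : J -> V) :
  (forall i, i != i0 -> \sum_j T i j = row i) ->
  (forall j, j != j0 -> \sum_i T i j = col j) ->
  \sum_i T i j0 = \sum_j T i0 j + (\sum_(i | i != i0) row i - \sum_(j | j != j0) col j).
Proof.
move=> rowE colE.
have by_rows : \sum_i \sum_j T i j = \sum_j T i0 j + \sum_(i | i != i0) row i.
  by rewrite (bigD1 i0) //=; congr (_ + _); apply: eq_bigr => i /rowE.
have by_cols : \sum_i \sum_j T i j = \sum_i T i j0 + \sum_(j | j != j0) col j.
  by rewrite exchange_big (bigD1 j0) //=; congr (_ + _); apply: eq_bigr => j /colE.
by rewrite addrA -by_rows by_cols addrK.
Qed.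

Lemma sum_delta_neq (I : finType) (R : pzRingType) (i0 b : I) (G : I -> R) :
  \sum_(i | i != i0) (i == b)%:R * G i = G b - (i0 == b)%:R * G i0.
Proof.
apply/eqP; rewrite eq_sym subr_eq addrC -(bigD1 i0 (P := predT)) //=.
by rewrite (bigD1 b) //= eqxx mul1r big1 ?addr0 // => i /negbTE ->; rewrite mul0r.
Qed.

Section MonomialOrder.
Variable n : nat.
Implicit Types (x y : letter n) (a b v w : monomial n).
Local Open Scope nat_scope.

Lemma letter_lt_irr x : letter_lt x x = false.
Proof. by case: x => [[] [p q]]; rewrite /letter_lt /lex_lt /= !ltnn andbF. Qed.

Lemma word_lex_lt_cat v w b b' : word_lex_lt v w -> word_lex_lt (v ++ b) (w ++ b').
Proof. by elim: v w => [|x v IHv] [|y w] //=; case: (x == y) => //; apply: IHv. Qed.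

Lemma word_lex_lt_catl a v w : word_lex_lt (a ++ v) (a ++ w) = word_lex_lt v w.
Proof. by elim: a => //= x a IHa; rewrite eqxx. Qed.

Lemma mon_lt_cat a v w b : mon_lt v w -> mon_lt (a ++ v ++ b) (a ++ w ++ b).
Proof.
rewrite /mon_lt !size_cat => /orP [lt_vw|/andP [/eqP eq_vw lex_vw]].
  by rewrite ltn_add2l ltn_add2r lt_vw.
by rewrite eq_vw eqxx word_lex_lt_catl word_lex_lt_cat ?orbT.
Qed.

Lemma mon_lt_cons x v w : mon_lt v w -> mon_lt (x :: v) (x :: w).
Proof. by move/(mon_lt_cat [:: x] [::]); rewrite !cats0. Qed.

Lemma mon_lt_head x y v w :
  size v = size w -> letter_lt x y -> mon_lt (x :: v) (y :: w).
Proof.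
move=> eq_size lt_xy; rewrite /mon_lt /= eq_size ltnn eqxx /=.
by case: eqP lt_xy => [->|//]; rewrite letter_lt_irr.
Qed.

Lemma mon_lt_nil w : w != [::] -> mon_lt [::] w.
Proof. by case: w. Qed.

(* The order is embedded in (nat, <) by reading a word as a numeral in base
   [word_base] behind a leading digit 1, the digit of a letter being its rank. *)
Definition pair_rank (p : 'I_n * 'I_n) : nat := p.1 * n + p.2.
Definition letter_rank x : nat :=
  if x.1 then (n * n).-1 - pair_rank x.2 else n * n + pair_rank x.2.
Definition word_base : nat := (n * n).*2.+2.

Fixpoint word_value w : nat :=
  if w is x :: w' then letter_rank x * word_base ^ size w' + word_value w' else 0.

Definition mon_weight w : nat := word_base ^ size w + word_value w.

Lemma pair_rank_lt p : pair_rank p < n * n.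
Proof. by case: p => [[a lt_an] [b lt_bn]]; rewrite /pair_rank /=; nia. Qed.

Lemma pair_rank_mono p q : lex_lt p q -> pair_rank p < pair_rank q.
Proof.
case: p q => [[a lt_an] [b lt_bn]] [[c lt_cn] [d lt_dn]].
rewrite /lex_lt /pair_rank /= => /orP [lt_ac|/andP [/eqP [] -> lt_bd]]; last lia.
have : a.+1 * n <= c * n by rewrite leq_mul2r lt_ac orbT.
by rewrite mulSn; lia.
Qed.

Lemma letter_rank_lt x : letter_rank x < word_base.
Proof. by rewrite /letter_rank /word_base; have := pair_rank_lt x.2; case: x.1; lia. Qed.

Lemma letter_rank_mono x y : letter_lt x y -> letter_rank x < letter_rank y.
Proof.
rewrite /letter_lt /letter_rank; case: x y => [[] p] [[] q] //= lt_xy.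
- by have := pair_rank_mono lt_xy; have := pair_rank_lt p; lia.
- by have := pair_rank_lt p; have := pair_rank_lt q; lia.
- by have := pair_rank_mono lt_xy; lia.
Qed.

Lemma word_value_lt w : word_value w < word_base ^ size w.
Proof.
elim: w => [|x w IHw] /=; first by rewrite expn0.
by rewrite expnS; have := letter_rank_lt x; set B := word_base ^ size w; nia.
Qed.

Lemma word_value_mono v w :
  size v = size w -> word_lex_lt v w -> word_value v < word_value w.
Proof.
elim: v w => [|x v IHv] [|y w] //= [eq_size].
case: eqP => [-> lex_vw|_ lt_xy]; first by rewrite eq_size ltn_add2l IHv.
have := letter_rank_mono lt_xy; have := word_value_lt v; rewrite eq_size.
by set B := word_base ^ size w; nia.
Qed.

Lemma mon_weight_mono v w : mon_lt v w -> mon_weight v < mon_weight w.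
Proof.
rewrite /mon_lt /mon_weight => /orP [lt_size|/andP [/eqP eq_size lex_vw]].
  have : word_base ^ (size v).+1 <= word_base ^ size w by rewrite leq_exp2l.
  have := word_value_lt v; rewrite expnS /word_base; set B := _ ^ size v; nia.
by rewrite eq_size ltn_add2l word_value_mono.
Qed.

Lemma mon_lt_ind (P : monomial n -> Prop) :
  (forall w, (forall v, mon_lt v w -> P v) -> P w) -> forall w, P w.
Proof.
move=> IH w; move: {2}(mon_weight w) (erefl (mon_weight w)) => N.
elim/ltn_ind: N w => N IHN w eq_N; apply: IH => v /mon_weight_mono.
by rewrite eq_N => /IHN; apply.
Qed.

End MonomialOrder.

Section LinearExtension.
Variables (k : fieldType) (n : nat).
Implicit Types (F G : monomial n -> k) (p q : fpoly k n) (v w : monomial n).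

Definition linext F p : k := \sum_(t <- p) t.1 * F t.2.

Lemma eq_linext F G p : F =1 G -> linext F p = linext G p.
Proof. by move=> eq_FG; apply: eq_bigr => t _; rewrite eq_FG. Qed.

Lemma linext_cat F p q : linext F (p ++ q) = linext F p + linext F q.
Proof. exact: big_cat. Qed.

Lemma linext_mull F p q :
  linext F (fpoly_mul p q) = \sum_(s <- p) s.1 * linext (fun w => F (s.2 ++ w)) q.
Proof.
rewrite /linext big_allpairs_dep; apply: eq_bigr => s _.
by rewrite big_distrr; apply: eq_bigr => t _ /=; rewrite mulrA.
Qed.

Lemma linext_mulr F p q :
  linext F (fpoly_mul p q) = \sum_(s <- q) s.1 * linext (fun w => F (w ++ s.2)) p.
Proof.
rewrite /linext big_allpairs_dep exchange_big; apply: eq_bigr => s _.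
by rewrite big_distrr; apply: eq_bigr => t _ /=; rewrite mulrA [s.1 * _]mulrC.
Qed.

Lemma linext_swap (G : monomial n -> monomial n -> k) p q :
  linext (fun v => linext (G v) q) p = linext (fun w => linext (G^~ w) p) q.
Proof.
rewrite /linext; under eq_bigr do rewrite big_distrr.
rewrite exchange_big; apply: eq_bigr => s _; rewrite big_distrr.
by apply: eq_bigr => t _ /=; rewrite !mulrA [t.1 * s.1]mulrC.
Qed.

Lemma coef_linext p w : coef p w = linext (fun v => (v == w)%:R) p.
Proof.
rewrite /coef /linext big_mkcond; apply: eq_bigr => t _.
by case: eqP; rewrite ?mulr1 ?mulr0.
Qed.

Lemma linext_neq0 F p : linext F p != 0 -> exists2 t, t \in p & F t.2 != 0.
Proof.
move=> nz; have /hasP [t t_p Ft] : has (fun t => F t.2 != 0) p; last by exists t.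
apply: contraNT nz => /hasPn F0; rewrite /linext big_seq big1 // => t /F0.
by rewrite negbK => /eqP ->; rewrite mulr0.
Qed.

Lemma linext_support F p (S : seq (monomial n)) :
  uniq S -> {subset [seq t.2 | t <- p] <= S} ->
  linext F p = \sum_(v <- S) coef p v * F v.
Proof.
move=> uniq_S supp_p; rewrite /coef.
under eq_bigr do rewrite big_distrl big_mkcond /=.
rewrite exchange_big; apply: eq_big_seq => t t_p.
rewrite (big_rem t.2) ?supp_p ?map_f //= eqxx big1_seq ?addr0 // => v /=.
by rewrite mem_rem_uniq // => /andP [v_neq _]; rewrite eq_sym (negbTE v_neq).
Qed.

Lemma eq_linext_coef F p q : coef p =1 coef q -> linext F p = linext F q.
Proof.
move=> eq_pq; set S := undup [seq t.2 | t <- p ++ q].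
have supp_pq r : {subset [seq t.2 | t <- r] <= [seq t.2 | t <- p ++ q]} ->
    linext F r = \sum_(v <- S) coef r v * F v.
  by move=> sub_r; apply: linext_support (undup_uniq _) _ => v /sub_r; rewrite mem_undup.
rewrite !supp_pq; first by apply: eq_bigr => v _; rewrite eq_pq.
all: by move=> v; rewrite map_cat mem_cat => ->; rewrite ?orbT.
Qed.

Lemma eq_linext_supp F G p :
  (forall v, coef p v != 0 -> F v = G v) -> linext F p = linext G p.
Proof.
move=> eq_FG; have supp_p : {subset [seq t.2 | t <- p] <= undup [seq t.2 | t <- p]}.
  by move=> v; rewrite mem_undup.
rewrite !(linext_support _ (undup_uniq _) supp_p); apply: eq_bigr => v _.
by have [->|/eq_FG ->] := eqVneq (coef p v) 0; rewrite ?mul0r.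
Qed.

End LinearExtension.

Section MonomialMultiples.
Variables (k : fieldType) (n : nat).
Implicit Types (p : fpoly k n) (a b t v w : monomial n).

Definition monmul a p b : fpoly k n := fpoly_mul [:: (1, a)] (fpoly_mul p [:: (1, b)]).

Lemma linext_monmul F a p b : linext F (monmul a p b) = linext (fun w => F (a ++ w ++ b)) p.
Proof. by rewrite linext_mull big_seq1 mul1r linext_mulr big_seq1 mul1r. Qed.

Lemma coef_monmul a p b w : coef (monmul a p b) (a ++ w ++ b) = coef p w.
Proof.
rewrite !coef_linext linext_monmul.
by apply: eq_linext => v; rewrite eqseq_cat2.
Qed.

Lemma is_tip_monmul a p b t : is_tip p t -> is_tip (monmul a p b) (a ++ t ++ b).
Proof.
case=> coef_t max_t; split=> [|v coef_v]; first by rewrite coef_monmul.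
have := coef_v; rewrite coef_linext linext_monmul => /linext_neq0 [s _].
case: (a ++ s.2 ++ b =P v) => [eq_v _|_]; last by rewrite mulr0n eqxx.
move: coef_v; rewrite -eq_v coef_monmul => /max_t /orP [/eqP ->|lt_st].
  by rewrite /mon_le eqxx.
by rewrite /mon_le mon_lt_cat ?orbT.
Qed.

End MonomialMultiples.

Section Relations.
Variables (k : fieldType) (n : nat).
Implicit Types (s tr : bool) (i j c : 'I_n).

Lemma rK : involutive (@r n).
Proof. exact: rev_ordK. Qed.

(* Reflecting the indices of the two starred matrices by [r] puts the four
   families of relations into the uniform shape of [linext_urel]. *)
Definition uletter s tr j c : letter n := (s, if tr then (c, j) else (j, c)).
Definition uword s tr j i c : monomial n := [:: uletter s tr j c; uletter (~~ s) tr i c].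
Definition umatrix s tr : xmat n :=
  if s then if tr then mdag (@umat n) else mstar (@umat n)
  else if tr then mtr (@umat n) else @umat n.
Definition rindex s j : 'I_n := if s then r j else j.
Definition urel s tr j i : fpoly k n :=
  relation k (umatrix s tr) (rindex s j) (rindex s i).

Lemma uletterNtr s tr j c : uletter s (~~ tr) j c = uletter s tr c j.
Proof. by case: tr. Qed.

Lemma uletter_inj s tr j : injective (uletter s tr j).
Proof. by case: tr => c c' []. Qed.

Lemma rindexK s : involutive (rindex s).
Proof. by case: s => // j; rewrite /= rK. Qed.

Lemma urel_inR s tr j i : inR (urel s tr j i).
Proof.
exists (umatrix s tr), (rindex s j), (rindex s i).
by split=> //; case: s tr => [] []; rewrite /inM; tauto.
Qed.

Lemma inR_urel g : inR g -> exists s tr j i, g = urel s tr j i.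
Proof.
case=> v [j [i [[->|[->|[->|->]]] ->]]].
- by exists false, false, j, i.
- by exists false, true, j, i.
- by exists true, false, (r j), (r i); rewrite /urel /= !rK.
- by exists true, true, (r j), (r i); rewrite /urel /= !rK.
Qed.

Lemma urelE s tr j i :
  urel s tr j i = [seq (1, uword s tr j i (rindex (~~ s) c)) | c <- enum 'I_n]
                  ++ (if j == i then [:: (-1, [::])] else [::]).
Proof.
rewrite /urel /relation (can_eq (rindexK s)); congr (_ ++ _); apply: eq_map => c.
by case: s tr => [] []; rewrite /umatrix /uword /uletter /mdag /mstar /mtr /ustar /umat /= !rK.
Qed.

Lemma linext_urel F s tr j i :
  linext F (urel s tr j i) = \sum_c F (uword s tr j i c) - (j == i)%:R * F [::].
Proof.
rewrite urelE linext_cat /linext big_map big_enum /=; congr (_ + _).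
  rewrite [RHS](reindex_inj (can_inj (rindexK (~~ s)))).
  by apply: eq_bigr => c _; rewrite mul1r.
by case: (j == i); rewrite ?big_nil ?big_seq1 /= ?mulN1r ?mul1r ?mul0r ?oppr0.
Qed.

Lemma mem_urel s tr j i t :
  t \in urel s tr j i -> t.2 = [::] \/ exists c, t.2 = uword s tr j i c.
Proof.
rewrite urelE mem_cat => /orP [/mapP [c _ ->]|]; first by right; exists (rindex (~~ s) c).
by case: (j == i); rewrite ?inE // => /eqP ->; left.
Qed.

Lemma uword_trC s j c : uword s true j j c = uword s false c c j.
Proof. by rewrite /uword -!(uletterNtr _ false). Qed.

End Relations.

Section Rules.
Variables (k : fieldType) (m : nat).
Local Notation n := m.+2.
Implicit Types (s tr : bool) (i j c : 'I_n) (F : monomial n -> k).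

Definition top_index s : 'I_n := if s then ord0 else ord_max.
Definition ulead s tr j i : monomial n := uword s tr j i (top_index s).

(* This is where [2 <= n] is needed: for n = 1 the two extreme indices
   coincide and further leading words overlap. *)
Lemma top_indexN s : (top_index (~~ s) == top_index s) = false.
Proof. by case: s. Qed.

Lemma uletter_lt_top s tr j c :
  c != top_index s -> letter_lt (uletter s tr j c) (uletter s tr j (top_index s)).
Proof.
case: c => c lt_c_n; rewrite /letter_lt /lex_lt.
by case: s tr => [] [] /=; rewrite -val_eqE /= ?ltnn ?eqxx /=; lia.
Qed.

Lemma uletter_lt_topl s tr j c :
  j != top_index s -> letter_lt (uletter s tr j c) (uletter s tr (top_index s) c).
Proof.
by move=> j_top; have := @uletter_lt_top s (~~ tr) c j j_top; rewrite !uletterNtr.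
Qed.

Lemma uword_lt_ulead s tr j i c :
  c != top_index s -> mon_lt (uword s tr j i c) (ulead s tr j i).
Proof. by move=> c_top; apply: mon_lt_head (uletter_lt_top _ _ c_top). Qed.

Lemma coef_urel_ulead s tr j i : coef (urel k s tr j i) (ulead s tr j i) = 1.
Proof.
rewrite coef_linext linext_urel mulr0n mulr0 subr0 (bigD1 (top_index s)) //=.
rewrite eqxx big1 ?addr0 // => c c_top.
by rewrite eqseq_cons (inj_eq (@uletter_inj _ _ _ _)) (negbTE c_top).
Qed.

Definition rule : Type := (bool * bool * 'I_n * 'I_n)%type.
Definition rule_rel (p : rule) : fpoly k n := let: (s, tr, j, i) := p in urel k s tr j i.
Definition rule_lead (p : rule) : monomial n := let: (s, tr, j, i) := p in ulead s tr j i.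
Definition rule_tail (p : rule) : fpoly k n := [seq t <- rule_rel p | t.2 != rule_lead p].

Lemma rule_lead_pair p : exists x y, rule_lead p = [:: x; y].
Proof. by case: p => [[[s tr] j] i]; do 2 eexists. Qed.

Lemma inR_rule g : inR g <-> exists p, g = rule_rel p.
Proof.
split=> [/inR_urel [s [tr [j [i ->]]]]|[[[[s tr] j] i] ->]]; last exact: urel_inR.
by exists (s, tr, j, i).
Qed.

Lemma linext_rule F p : linext F (rule_rel p) = F (rule_lead p) + linext F (rule_tail p).
Proof.
rewrite /linext big_filter (bigID (fun t => t.2 == rule_lead p)) /=; congr (_ + _).
have -> : \sum_(t <- rule_rel p | t.2 == rule_lead p) t.1 * F t.2 =
          coef (rule_rel p) (rule_lead p) * F (rule_lead p).
  by rewrite /coef big_distrl; apply: eq_bigr => t /eqP ->.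
by case: p => [[[s tr] j] i]; rewrite coef_urel_ulead mul1r.
Qed.

Lemma rule_tail_lt p t : t \in rule_tail p -> mon_lt t.2 (rule_lead p).
Proof.
case: p => [[[s tr] j] i]; rewrite mem_filter /= => /andP [t_lead /mem_urel [->|[c t_c]]].
  exact: mon_lt_nil.
rewrite t_c uword_lt_ulead //; apply: contraNneq t_lead => c_top.
by rewrite t_c c_top.
Qed.

Lemma linext_rule_lead F p :
  (forall v, mon_lt v (rule_lead p) -> F v = 0) -> linext F (rule_rel p) = F (rule_lead p).
Proof.
move=> F0; rewrite linext_rule /linext big_seq big1 ?addr0 // => t /rule_tail_lt lt_t.
by rewrite F0 ?mulr0.
Qed.

Lemma is_tip_rule p : is_tip (rule_rel p) (rule_lead p).
Proof.
split=> [|v]; first by case: p => [[[s tr] j] i]; rewrite coef_urel_ulead oner_neq0.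
rewrite coef_linext linext_rule /mon_le; case: (rule_lead p =P v) => [<-|_].
  by rewrite eqxx.
rewrite mulr0n add0r => /linext_neq0 [t /rule_tail_lt lt_t].
case: (t.2 =P v) => [<- _|_]; last by rewrite mulr0n eqxx.
by rewrite lt_t orbT.
Qed.

Variant leftmost_redex_spec (w : monomial n) :
    option (monomial n * rule * monomial n) -> Prop :=
| LeftmostRedex a p b of w = a ++ rule_lead p ++ b :
    leftmost_redex_spec w (Some (a, p, b))
| NoRedex of (forall a p b, w <> a ++ rule_lead p ++ b) : leftmost_redex_spec w None.

Definition redex_rule (x y : letter n) : option rule := [pick p | rule_lead p == [:: x; y]].

Fixpoint leftmost_redex (w : monomial n) : option (monomial n * rule * monomial n) :=
  if w is x :: w' then
    if w' is y :: b then
      if redex_rule x y is Some p then Some ([::], p, b)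
      else omap (fun '(a, p, b) => (x :: a, p, b)) (leftmost_redex w')
    else None
  else None.

Lemma leftmost_redex_cons2 x y w :
  leftmost_redex [:: x, y & w] =
  if redex_rule x y is Some p then Some ([::], p, w)
  else omap (fun '(a, p, b) => (x :: a, p, b)) (leftmost_redex (y :: w)).
Proof. by []. Qed.

Lemma leftmost_redexP w : leftmost_redex_spec w (leftmost_redex w).
Proof.
have short v a p b : (size v <= 1)%N -> v <> a ++ rule_lead p ++ b.
  move=> le_v eq_v; move: le_v; rewrite eq_v.
  by have [x [y ->]] := rule_lead_pair p; rewrite !size_cat /=; lia.
elim: w => [|x w IHw]; first by constructor=> a p b; apply: short.
case: w IHw => [|y w] IHw; first by constructor=> a p b; apply: short.
rewrite leftmost_redex_cons2 /redex_rule.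
case: pickP => [p /eqP lead_p|no_redex]; first by constructor; rewrite lead_p.
case: IHw => [a p b ->|irr]; first by constructor.
constructor=> -[|z a] p b /=; last by case=> _ /irr.
have [x' [y' lead_p]] := rule_lead_pair p.
by rewrite lead_p => -[eq_x eq_y _]; have := no_redex p; rewrite lead_p eq_x eq_y eqxx.
Qed.

Definition vanishes_at F (V : monomial n) : Prop :=
  forall a p b, V = a ++ rule_lead p ++ b ->
    linext (fun w => F (a ++ w ++ b)) (rule_rel p) = 0.

Definition vanishes_below F (V : monomial n) : Prop :=
  forall V', mon_lt V' V -> vanishes_at F V'.

Lemma vanishes_below_cat F a V b :
  vanishes_below F (a ++ V ++ b) -> vanishes_below (fun w => F (a ++ w ++ b)) V.
Proof.
move=> F0 V' lt_V' a' p b' eq_V'.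
have := F0 _ (mon_lt_cat a b lt_V') (a ++ a') p (b' ++ b).
by rewrite eq_V' -!catA => /(_ erefl) <-; apply: eq_linext => w; rewrite -!catA.
Qed.

End Rules.

Section Resolution.
Variables (k : fieldType) (m : nat).
Local Notation n := m.+2.
Local Notation top := (@top_index m).
Local Notation rule := (rule m).
Local Notation rule_rel := (@rule_rel k m).
Implicit Types (F : monomial n -> k) (s tr : bool) (i j c : 'I_n).

Lemma vanishes_below_urel F V a s tr j i b :
  vanishes_below F V -> mon_lt (a ++ ulead s tr j i ++ b) V ->
  \sum_c F (a ++ uword s tr j i c ++ b) = (j == i)%:R * F (a ++ b).
Proof.
move=> F0 lt_V; apply/eqP; rewrite -subr_eq0.
have := F0 _ lt_V a (s, tr, j, i) b erefl.
by rewrite [rule_rel _]/= linext_urel cat0s => /eqP.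
Qed.

Lemma urel_inclusion F s :
  vanishes_below F (ulead s false (top s) (top s)) ->
  linext F (urel k s false (top s) (top s)) = linext F (urel k s true (top s) (top s)).
Proof.
move=> F0; set e := top s in F0 *; rewrite !linext_urel; congr (_ - _).
under [RHS]eq_bigr do rewrite uword_trC.
rewrite (@sum_grid _ _ _ (fun p q => F (uword s false p p q)) e e
  (fun=> F [::]) (fun=> F [::])) ?subrr ?addr0 // => [p p_e|q q_e].
  have := @vanishes_below_urel F _ [::] s false p p [::] F0.
  rewrite cat0s cats0 eqxx mul1r; under eq_bigr do rewrite cat0s cats0; apply.
  exact: mon_lt_head (uletter_lt_topl _ _ p_e).
have := @vanishes_below_urel F _ [::] s true q q [::] F0.
rewrite cat0s cats0 eqxx mul1r; under eq_bigr do rewrite cat0s cats0 uword_trC; apply.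
by apply: mon_lt_head => //; rewrite (uletterNtr _ false); apply: uletter_lt_top.
Qed.

Lemma urel_overlap F s tr j b :
  vanishes_below F (ulead s tr j (top (~~ s)) ++ [:: uletter s tr (top (~~ s)) b]) ->
  linext (fun w => F (w ++ [:: uletter s tr (top (~~ s)) b])) (urel k s tr j (top (~~ s))) =
  linext (fun w => F (uletter s tr j (top s) :: w)) (urel k (~~ s) (~~ tr) (top s) b).
Proof.
move=> F0; set e := top s in F0 *; set e' := top (~~ s) in F0 *.
(* The two sides are the column [e'] and the row [e] of the array [T]. *)
pose T p q := F [:: uletter s tr j p; uletter (~~ s) tr q p; uletter s tr q b].
have uwordN q c : uword (~~ s) (~~ tr) q b c = [:: uletter (~~ s) tr c q; uletter s tr c b].
  by rewrite /uword negbK !uletterNtr.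
rewrite !linext_urel.
under [X in X - _ = _]eq_bigr do rewrite -/(T _ e').
under [X in _ = X - _]eq_bigr do rewrite uwordN -/(T e _).
rewrite (@sum_grid _ _ _ T e e' (fun p => (p == b)%:R * F [:: uletter s tr j p])
  (fun q => (q == j)%:R * F [:: uletter s tr q b])) => [|p p_e|q q_e].
- by rewrite !sum_delta_neq [e' == j]eq_sym; ring.
- have := @vanishes_below_urel F _ [:: uletter s tr j p] (~~ s) (~~ tr) p b [::] F0.
  rewrite !cats0; under eq_bigr do rewrite uwordN; apply.
  by apply: mon_lt_head => //; apply: uletter_lt_top.
- have := @vanishes_below_urel F _ [::] s tr j q [:: uletter s tr q b] F0.
  rewrite cat0s eq_sym; apply; apply: mon_lt_cons.
  by apply: mon_lt_head => //; apply: uletter_lt_topl.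
Qed.

Implicit Types (p q : rule) (a b : monomial n).

Lemma rule_lead_eq p q : rule_lead p = rule_lead q ->
  p = q \/ exists s tr, p = (s, tr, top s, top s) /\ q = (s, ~~ tr, top s, top s).
Proof.
case: p q => [[[s tr] j] i] [[[s' tr'] j'] i']; rewrite /= /ulead /uword /uletter.
by case: tr tr' => [] [] [<-] *; subst;
  [left | right; exists s, true | right; exists s, false | left].
Qed.

Lemma rule_overlap_eq p q x y z : rule_lead p = [:: x; y] -> rule_lead q = [:: y; z] ->
  exists s tr j i, p = (s, tr, j, top (~~ s)) /\ q = (~~ s, ~~ tr, top s, i).
Proof.
case: p q => [[[s tr] j] i] [[[s' tr'] j'] i'].
rewrite /= /ulead /uword => -[_ <-] [-> + _].
case: tr tr' => [] [] [e1 e2]; subst.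
- by move/eqP: e1; rewrite top_indexN.
- by exists s, true, j, i'.
- by exists s, false, j, i'.
- by move/eqP: e2; rewrite top_indexN.
Qed.

Lemma resolve_inclusion F a p q b : rule_lead p = rule_lead q ->
  vanishes_below F (a ++ rule_lead p ++ b) ->
  linext (fun w => F (a ++ w ++ b)) (rule_rel p) =
  linext (fun w => F (a ++ w ++ b)) (rule_rel q).
Proof.
move=> /rule_lead_eq [-> //|[s [tr [-> ->]]]] /vanishes_below_cat /=.
rewrite /ulead; case: tr => F0; last exact: urel_inclusion.
by rewrite uword_trC in F0; symmetry; apply: urel_inclusion.
Qed.

Lemma resolve_overlap F a x y z b p q :
  rule_lead p = [:: x; y] -> rule_lead q = [:: y; z] ->
  vanishes_below F (a ++ [:: x; y; z] ++ b) ->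
  linext (fun w => F (a ++ w ++ z :: b)) (rule_rel p) =
  linext (fun w => F ((a ++ [:: x]) ++ w ++ b)) (rule_rel q).
Proof.
move=> lead_p lead_q /vanishes_below_cat F0.
have [s [tr [j [i [eq_p eq_q]]]]] := rule_overlap_eq lead_p lead_q; subst p q.
move: lead_p lead_q F0; rewrite /= /ulead /uword => -[<- <-] [_ <-].
rewrite negbK uletterNtr => /urel_overlap eqF.
apply: etrans (etrans _ eqF) _; apply: eq_linext => w /=; by rewrite -!catA.
Qed.

Lemma linext_disjoint (G : monomial n -> monomial n -> k) p q :
  (forall v, mon_lt v (rule_lead p) -> linext (G v) (rule_rel q) = 0) ->
  (forall w, mon_lt w (rule_lead q) -> linext (G^~ w) (rule_rel p) = 0) ->
  linext (G^~ (rule_lead q)) (rule_rel p) = linext (G (rule_lead p)) (rule_rel q).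
Proof.
move=> G0p G0q; rewrite -(linext_rule_lead (F := fun w => linext (G^~ w) _) G0q).
by rewrite -(linext_rule_lead (F := fun v => linext (G v) _) G0p) linext_swap.
Qed.

Lemma resolve_disjoint F a p (c : monomial n) q b :
  vanishes_below F (a ++ rule_lead p ++ c ++ rule_lead q ++ b) ->
  linext (fun w => F (a ++ w ++ c ++ rule_lead q ++ b)) (rule_rel p) =
  linext (fun w => F ((a ++ rule_lead p ++ c) ++ w ++ b)) (rule_rel q).
Proof.
move=> F0; pose G v w := F (a ++ v ++ c ++ w ++ b).
rewrite [RHS](eq_linext _ (G := G (rule_lead p))) => [|w]; last by rewrite /G -!catA.
apply: (linext_disjoint (G := G)) => [v lt_v|w lt_w].
  rewrite -(F0 _ (mon_lt_cat a (c ++ rule_lead q ++ b) lt_v) (a ++ v ++ c) q b); last first.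
    by rewrite -!catA.
  by apply: eq_linext => w; rewrite /G -!catA.
apply: (F0 _ _ a p (c ++ w ++ b) erefl).
by have := mon_lt_cat (a ++ rule_lead p ++ c) b lt_w; rewrite -!catA.
Qed.

Lemma reductions_agree F W a1 p1 b1 a2 p2 b2 : vanishes_below F W ->
  W = a1 ++ rule_lead p1 ++ b1 -> W = a2 ++ rule_lead p2 ++ b2 ->
  linext (fun w => F (a1 ++ w ++ b1)) (rule_rel p1) =
  linext (fun w => F (a2 ++ w ++ b2)) (rule_rel p2).
Proof.
move=> F0; wlog le_a : a1 p1 b1 a2 p2 b2 / (size a1 <= size a2)%N.
  move=> wlog_le eq1 eq2; case: (leqP (size a1) (size a2)) => [|/ltnW] le_a.
    exact: wlog_le.
  by symmetry; apply: wlog_le.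
have [x1 [y1 lead1]] := rule_lead_pair p1; have [x2 [y2 lead2]] := rule_lead_pair p2.
move=> eq1 eq2; have := etrans (esym eq1) eq2; rewrite lead1 lead2 => eqW.
case: (cat2_eq_cases eqW le_a) => [[ea ex ey eb]|[ea ex eb]|[c [ea eb]]]; subst.
- by apply: resolve_inclusion => //; rewrite lead1 lead2.
- by apply: (resolve_overlap lead1 lead2); move: F0; rewrite lead1.
- have -> : [:: x2, y2 & b2] = rule_lead p2 ++ b2 by rewrite lead2.
  have -> : [:: x1, y1 & c] = rule_lead p1 ++ c by rewrite lead1.
  by apply: resolve_disjoint; move: F0; rewrite lead1 lead2.
Qed.

End Resolution.

Section NormalForm.
Variables (k : fieldType) (m : nat).
Local Notation n := m.+2.
Local Notation rule_rel := (@rule_rel k m).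
Local Notation rule_tail := (@rule_tail k m).
Variable w0 : monomial n.

(* [nf_coef w] is the coefficient of [w0] in the normal form of [w] obtained by
   always rewriting the leftmost redex; any fuel above the weight of [w] suffices. *)
Fixpoint nf_coef_rec (fuel : nat) (w : monomial n) : k :=
  if fuel is fuel'.+1 then
    if leftmost_redex w is Some (a, p, b) then
      - linext (fun v => nf_coef_rec fuel' (a ++ v ++ b)) (rule_tail p)
    else (w == w0)%:R
  else 0.

Definition nf_coef (w : monomial n) : k := nf_coef_rec (mon_weight w).+1 w.

Lemma mon_weight_rule_tail a p b t :
  t \in rule_tail p -> (mon_weight (a ++ t.2 ++ b) < mon_weight (a ++ rule_lead p ++ b))%N.
Proof. by move/rule_tail_lt/(mon_lt_cat a b)/mon_weight_mono. Qed.

Lemma nf_coef_rec_stable fuel1 fuel2 w :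
  (mon_weight w < fuel1)%N -> (mon_weight w < fuel2)%N ->
  nf_coef_rec fuel1 w = nf_coef_rec fuel2 w.
Proof.
elim: fuel1 fuel2 w => [|fuel1 IHfuel] [|fuel2] w //= lt1 lt2.
case: leftmost_redexP => // a p b eq_w; congr (- _); apply: eq_big_seq => t t_tail.
have := mon_weight_rule_tail a b t_tail; rewrite -eq_w => lt_t.
by rewrite (IHfuel fuel2) //; apply: leq_trans lt_t _; rewrite -ltnS.
Qed.

Lemma nf_coefE w : nf_coef w =
  if leftmost_redex w is Some (a, p, b) then
    - linext (fun v => nf_coef (a ++ v ++ b)) (rule_tail p)
  else (w == w0)%:R.
Proof.
rewrite /nf_coef /=; case: leftmost_redexP => // a p b eq_w; congr (- _).
apply: eq_big_seq => t t_tail; have := mon_weight_rule_tail a b t_tail; rewrite -eq_w => lt_t.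
by rewrite (@nf_coef_rec_stable _ (mon_weight (a ++ t.2 ++ b)).+1).
Qed.

Lemma nf_coef_vanishes_at W : vanishes_at nf_coef W.
Proof.
elim/mon_lt_ind: W => W IHW a p b eq_W.
have F0 : vanishes_below nf_coef W by move=> V /IHW.
move: (nf_coefE W); case: leftmost_redexP => [a' p' b' eq_W' nf_W|irr _]; last first.
  by case: (irr _ _ _ eq_W).
by rewrite (reductions_agree F0 eq_W eq_W') linext_rule /= -eq_W' nf_W addNr.
Qed.

Lemma nf_coef_ideal (p : fpoly k n) :
  inI p -> forall a b, linext (fun v => nf_coef (a ++ v ++ b)) p = 0.
Proof.
elim=> {p} [g /inR_rule [q ->]|p q _ IHp _ IHq|c p _ IHp|p c _ IHp|p q _ IHp eq_pq] a b.
- exact: (nf_coef_vanishes_at erefl).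
- by rewrite linext_cat IHp IHq addr0.
- rewrite linext_mull big1 // => s _.
  rewrite (eq_linext _ (G := fun w => nf_coef ((a ++ s.2) ++ w ++ b))) ?IHp ?mulr0 //.
  by move=> w; rewrite /= -!catA.
- rewrite linext_mulr big1 // => s _.
  rewrite (eq_linext _ (G := fun w => nf_coef (a ++ w ++ s.2 ++ b))) ?IHp ?mulr0 //.
  by move=> w; rewrite /= -!catA.
- by rewrite -(eq_linext_coef _ eq_pq) IHp.
Qed.

Lemma nf_coef_below v : (mon_weight v < mon_weight w0)%N -> nf_coef v = 0.
Proof.
elim/mon_lt_ind: v => v IHv lt_v; rewrite nf_coefE.
case: leftmost_redexP => [a p b eq_v|_]; last first.
  by case: eqP lt_v => [->|//]; rewrite ltnn.
rewrite /linext big_seq big1 ?oppr0 // => t t_tail.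
have lt_t := rule_tail_lt t_tail; rewrite IHv ?mulr0 //; first by rewrite eq_v mon_lt_cat.
by apply: ltn_trans lt_v; rewrite eq_v; apply/mon_weight_mono/mon_lt_cat.
Qed.

Lemma ideal_tip_reducible (p : fpoly k n) :
  inI p -> is_tip p w0 -> exists a q b, w0 = a ++ rule_lead q ++ b.
Proof.
move=> p_I [coef_w0 max_w0]; move: (nf_coefE w0).
case: leftmost_redexP => [a q b -> _|_ nf_w0]; first by exists a, q, b.
case/eqP: coef_w0; rewrite coef_linext -(nf_coef_ideal p_I [::] [::]).
apply: eq_linext_supp => v /max_w0; rewrite /mon_le /= cats0.
case: eqP => [->|_ /mon_weight_mono/nf_coef_below ->]; first by rewrite nf_w0 eqxx.
by rewrite mulr0n.
Qed.

End NormalForm.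

Theorem proposition3p7 (k : fieldType) (n : nat) (hn : (2 <= n)%N)
    (w : monomial n) :
  (exists p : fpoly k n, inI p /\ is_tip p w) <->
  (exists (g : fpoly k n) (t a b : monomial n),
      inR g /\ is_tip g t /\ w = a ++ t ++ b).
Proof.
case: n hn w => [|[|m]] // _ w; split.
- case=> p [p_I tip_w]; have [a [q [b ->]]] := ideal_tip_reducible p_I tip_w.
  exists (rule_rel k q), (rule_lead q), a, b.
  by split; [apply/inR_rule; exists q | split; [exact: is_tip_rule|]].
- case=> g [t [a [b [g_R [tip_t ->]]]]]; exists (monmul a g b).
  by split; [apply/inI_mull/inI_mulr/inI_gen | exact: is_tip_monmul].
Qed.
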